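(* The three-element chain $3=\{0<1<2\}$ forms a strong generator of $\mathbf{CPO}$: it is a generator, and for every cpo $B$ and every proper subobject $f\colon A\to B$ (a monomorphism that is not an isomorphism) there is a cpo map $3\to B$ that does not factor through $f$.
   Context: A cpo is a poset in which every chain, including the empty chain, has a join. A cpo map is a map preserving joins of all chains. $\mathbf{CPO}$ is the category of cpo's and cpo maps. A set $\mathcal G$ of objects is a generator if for any two distinct morphisms $f,g\colon A\to B$ there are $G\in\mathcal G$ and $h\colon G\to A$ with $fh\ne gh$. Monomorphisms in $\mathbf{CPO}$ are exactly the injective cpo maps, and isomorphisms are exactly the bijective cpo maps that reflect the order. *)

From Stdlib Require Import Classical Lia.

Set Implicit Arguments.
Unset Strict Implicit.

Record poset := Poset {
  carrier :> Type;
  le : carrier -> carrier -> Prop;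
  le_refl : forall x, le x x;
  le_trans : forall x y z, le x y -> le y z -> le x z;
  le_antisym : forall x y, le x y -> le y x -> x = y }.
Arguments le {p} _ _.

Definition is_chain (P : poset) (C : P -> Prop) : Prop :=
  forall x y, C x -> C y -> le x y \/ le y x.

Arguments is_chain {P} C.

Definition is_join (P : poset) (C : P -> Prop) (j : P) : Prop :=
  (forall x, C x -> le x j) /\ (forall u, (forall x, C x -> le x u) -> le j u).

Arguments is_join {P} C j.

(** A cpo: every chain, including the empty one, has a join. *)
Record cpo := Cpo {
  cpo_poset :> poset;
  cpo_chain_join : forall C : cpo_poset -> Prop, is_chain C -> exists j, is_join C j }.

Definition is_cpo_map (A B : cpo) (f : A -> B) : Prop :=
  forall (C : A -> Prop) (j : A), is_chain C -> is_join C j ->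
    is_join (fun y : B => exists x, C x /\ y = f x) (f j).

Record cpo_map (A B : cpo) := CpoMap {
  cmap :> A -> B;
  cmap_join : is_cpo_map cmap }.

Definition is_mono (A B : cpo) (f : cpo_map A B) : Prop :=
  forall (C : cpo) (g1 g2 : cpo_map C A),
    (fun x => f (g1 x)) = (fun x => f (g2 x)) -> (g1 : C -> A) = g2.

Definition is_iso (A B : cpo) (f : cpo_map A B) : Prop :=
  exists g : cpo_map B A, (forall x, g (f x) = x) /\ (forall y, f (g y) = y).

Definition is_generator (G : cpo) : Prop :=
  forall (A B : cpo) (f g : cpo_map A B), (f : A -> B) <> g ->
    exists h : cpo_map G A, (fun x => f (h x)) <> (fun x => g (h x)).

Inductive three := T0 | T1 | T2.
Definition rank (x : three) : nat := match x with T0 => 0 | T1 => 1 | T2 => 2 end.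
Definition three_le (x y : three) : Prop := rank x <= rank y.

Definition three_poset : poset.
Proof.
  refine (@Poset three three_le _ _ _); unfold three_le.
  - intros; lia.
  - intros; lia.
  - intros [] [] H1 H2; simpl in *; try reflexivity; lia.
Defined.

Lemma three_chain_join : forall C : three_poset -> Prop, is_chain C -> exists j, is_join C j.
Proof.
  intros C _.
  destruct (classic (C T2)) as [H2|H2]; [exists T2|].
  { split; [intros [] _; simpl; unfold three_le; simpl; lia|].
    intros u Hu; apply Hu; exact H2. }
  destruct (classic (C T1)) as [H1|H1]; [exists T1|exists T0].
  { split.
    - intros [] Hx; simpl; unfold three_le; simpl; try lia; contradiction.
    - intros u Hu; apply Hu; exact H1. }
  { split.
    - intros [] Hx; simpl; unfold three_le; simpl; try lia; contradiction.
    - intros u _; simpl; unfold three_le; simpl; lia. }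
Qed.

Definition three_cpo : cpo := @Cpo three_poset three_chain_join.

(* Every cpo A has a least element (the join of the empty chain), so each
   pair a <= b in A gives a cpo map 3 -> A, namely 0, 1, 2 |-> bot, a, b:
   joins of chains in 3 are maxima, or 0 for the empty chain, and a monotone
   map sending 0 to bot preserves both.  With a = b this is the "point" of A
   at a.
   - Generator: two distinct maps A -> B differ at some x, hence after
     composition with the point at x.
   - Strong generator: suppose f : A -> B is mono and every map 3 -> B
     factors through f.  Points show that f is injective (f is mono) and
     surjective (points of B factor); the chains b <= b' of B factor, so f
     reflects the order.  A bijective order-reflecting cpo map is an
     isomorphism, since its set-theoretic inverse preserves joins of chains.
   Hence for a proper subobject some map 3 -> B does not factor. *)
From Stdlib Require Import Classical ClassicalEpsilon FunctionalExtensionality Lia.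

Set Implicit Arguments.
Unset Strict Implicit.

Ltac three_order := simpl in *; unfold three_le in *; simpl in *; lia.

(* Every cpo has a least element: the join of the empty chain. *)
Lemma cpo_bottom (A : cpo) : exists bot : A, forall x, le bot x.
Proof.
  destruct (@cpo_chain_join A (fun _ => False)) as [j [_ Hleast]].
  - intros x y [].
  - exists j; intro x; apply Hleast; intros ? [].
Qed.

(* Cpo maps are monotone: y is the join of the chain {x, y} when x <= y. *)
Lemma cpo_map_monotone (A B : cpo) (f : A -> B) :
  is_cpo_map f -> forall x y, le x y -> le (f x) (f y).
Proof.
  intros Hf x y Hxy.
  assert (Hchain : is_chain (P:=A) (fun z => z = x \/ z = y)).
  { intros u v [-> | ->] [-> | ->]; auto using le_refl. }
  assert (Hjoin : is_join (P:=A) (fun z => z = x \/ z = y) y).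
  { split.
    - intros z [-> | ->]; auto using le_refl.
    - intros u Hu; apply Hu; auto. }
  apply (proj1 (Hf _ _ Hchain Hjoin)); exists x; auto.
Qed.

Lemma three_join_cases (C : three_cpo -> Prop) (j : three_cpo) :
  is_join C j -> C j \/ (j = T0 /\ forall x, ~ C x).
Proof.
  intros [Hup Hleast].
  destruct (classic (C j)) as [Cj | nCj]; [now left | right].
  destruct j.
  - split; [reflexivity |].
    intros x Cx; pose proof (Hup x Cx); destruct x; [contradiction | three_order ..].
  - exfalso; assert (H : le (p:=three_cpo) T1 T0); [| three_order].
    apply Hleast; intros x Cx; pose proof (Hup x Cx).
    destruct x; [three_order | contradiction | three_order].
  - exfalso; assert (H : le (p:=three_cpo) T2 T1); [| three_order].
    apply Hleast; intros x Cx; pose proof (Hup x Cx).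
    destruct x; [three_order | three_order | contradiction].
Qed.

Definition chain3 (A : cpo) (bot a b : A) (t : three_cpo) : A :=
  match t with T0 => bot | T1 => a | T2 => b end.

Lemma chain3_cpo_map (A : cpo) (bot a b : A) :
  (forall x, le bot x) -> le a b -> is_cpo_map (chain3 bot a b).
Proof.
  intros Hbot Hab C j _ Hjoin.
  assert (Hmono : forall x y : three_cpo,
             le x y -> le (chain3 bot a b x) (chain3 bot a b y)).
  { intros [] [] H; simpl; try three_order; auto using le_refl. }
  destruct (three_join_cases Hjoin) as [Cj | [Hj0 Hempty]]; split.
  - intros y [x [Cx ->]]; apply Hmono, (proj1 Hjoin), Cx.
  - intros u Hu; apply Hu; exists j; auto.
  - intros y [x [Cx _]]; destruct (Hempty x Cx).
  - intros u _; subst j; apply Hbot.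
Qed.

Definition chain_map (A : cpo) (bot a b : A) (Hbot : forall x, le bot x)
  (Hab : le a b) : cpo_map three_cpo A :=
  CpoMap (chain3_cpo_map Hbot Hab).

Definition point (A : cpo) (bot : A) (Hbot : forall x, le bot x) (a : A)
  : cpo_map three_cpo A :=
  chain_map Hbot (le_refl a).

Lemma three_generator : is_generator three_cpo.
Proof.
  intros A B f g Hfg.
  destruct (cpo_bottom A) as [bot Hbot].
  destruct (not_all_ex_not _ _ (fun H => Hfg (functional_extensionality _ _ H)))
    as [x Hx].
  exists (point Hbot x); intro E; exact (Hx (equal_f E T1)).
Qed.

(* Monomorphisms of CPO are injective, by testing against points. *)
Lemma mono_injective (A B : cpo) (f : cpo_map A B) :
  is_mono f -> forall x y, f x = f y -> x = y.
Proof.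
  intros Hmono x y Exy.
  destruct (cpo_bottom A) as [bot Hbot].
  assert (E : (point Hbot x : three_cpo -> A) = point Hbot y).
  { apply Hmono, functional_extensionality; intros []; simpl; auto. }
  exact (equal_f E T1).
Qed.

Lemma bijective_reflecting_iso (A B : cpo) (f : cpo_map A B) :
  (forall x y, f x = f y -> x = y) ->
  (forall b, exists a, f a = b) ->
  (forall x y, le (f x) (f y) -> le x y) ->
  is_iso f.
Proof.
  intros Hinj Hsurj Hrefl.
  pose (g := fun b => proj1_sig (constructive_indefinite_description _ (Hsurj b))).
  assert (Hfg : forall b, f (g b) = b).
  { intro b; exact (proj2_sig (constructive_indefinite_description _ (Hsurj b))). }
  assert (Hg : is_cpo_map g).
  { intros C j _ [Hup Hleast]; split.
    - intros y [x [Cx ->]]; apply Hrefl; rewrite !Hfg; apply Hup, Cx.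
    - intros u Hu; apply Hrefl; rewrite Hfg; apply Hleast.
      intros x Cx; rewrite <- (Hfg x).
      apply (cpo_map_monotone (cmap_join f)), Hu; exists x; auto. }
  exists (CpoMap Hg); split; simpl.
  - intro x; apply Hinj; rewrite Hfg; reflexivity.
  - exact Hfg.
Qed.

Lemma mono_factoring_three_iso (A B : cpo) (f : cpo_map A B) :
  is_mono f ->
  (forall h : cpo_map three_cpo B,
      exists k : cpo_map three_cpo A, forall x, f (k x) = h x) ->
  is_iso f.
Proof.
  intros Hmono Hfactor.
  destruct (cpo_bottom B) as [bot Hbot].
  pose proof (mono_injective Hmono) as Hinj.
  apply bijective_reflecting_iso; [exact Hinj | |].
  - intro b; destruct (Hfactor (point Hbot b)) as [k Hk].
    exists (k T1); exact (Hk T1).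
  - intros x y Hxy; destruct (Hfactor (chain_map Hbot Hxy)) as [k Hk].
    rewrite <- (Hinj _ _ (Hk T1)), <- (Hinj _ _ (Hk T2)).
    apply (cpo_map_monotone (cmap_join k)); three_order.
Qed.

Theorem mainTheorem5 :
  is_generator three_cpo /\
  (forall (A B : cpo) (f : cpo_map A B), is_mono f -> ~ is_iso f ->
     exists h : cpo_map three_cpo B,
       ~ (exists k : cpo_map three_cpo A, forall x, f (k x) = h x)).
Proof.
  split; [exact three_generator |].
  intros A B f Hmono Hproper.
  apply not_all_not_ex; intro Hfactor.
  apply Hproper, (mono_factoring_three_iso Hmono).
  intro h; exact (NNPP _ (Hfactor h)).
Qed.
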